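(* Let $k\ge1$ and let real numbers $\eta_1,\dots,\eta_k$ satisfy $\eta_1+\cdots+\eta_k=1$ and $\eta_k\ge\eta_{k-1}\ge\cdots\ge\eta_1>0$. Then there exist sequences of positive integers $(a_{n,j})_{n\ge1}$, $1\le j\le k$, with $a_{1,1}<a_{1,2}<\cdots<a_{1,k}<a_{2,1}<\cdots<a_{2,k}<a_{3,1}<\cdots$, $$\lim_{n\to\infty}\frac{a_{n+1,1}-a_{n,k}}{a_{n+1,k}}=\eta_1,\qquad\lim_{n\to\infty}\frac{a_{n,i}-a_{n,i-1}}{a_{n,k}}=\eta_i\ (2\le i\le k),\qquad\lim_{n\to\infty}\frac{a_{n+1,1}}{a_{n,k}}=\infty,$$ such that, with $\zeta_j=\sum_{n\ge1}2^{-a_{n,j}}$, the set $\{1,\zeta_1,\dots,\zeta_k\}$ is linearly independent over $\mathbb{Q}$. *)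

From Stdlib Require Import Reals QArith Qreals.
From Coquelicot Require Import Coquelicot.
Open Scope R_scope.

Definition zeta (a : nat -> nat -> nat) (j : nat) : R :=
  Series (fun m : nat => / 2 ^ (a (S m) j)).

Definition Q_lin_indep (k : nat) (x : nat -> R) : Prop :=
  forall q : nat -> Q,
    sum_f_R0 (fun j => Q2R (q j) * x j) k = 0 ->
    forall j, (j <= k)%nat -> (q j == 0)%Q.

From Stdlib Require Import Reals QArith Qreals Lia Lra ZArith.
From Coquelicot Require Import Coquelicot.
Open Scope R_scope.

(* Row [n+1] of exponents is placed after [A_n = a_{n,k}]: with the scale
   [P_n = (n+1)(A_n+1)] it is [a_{n+1,j} = A_n + j + floor((eta_1+...+eta_j) P_n)].
   As [A_n = o(P_n)], every gap inside row [n+1] or just before it equals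
   [eta_i P_n + O(1)], which yields the three limits.

   Independence only uses that the gaps tend to infinity.  Given an integer
   relation [c_0 + sum_j c_j zeta_j = 0], the contribution of the rows after row
   [N], multiplied by [2^{a_{N,k}}], is an integer of size
   [O(2^{a_{N,k} - a_{N+1,1}})], hence zero for large [N].  The difference of two
   consecutive such tails is [sum_j c_j 2^{-a_{N+1,j}} = 0], a dyadic sum whose
   exponents are spaced further apart than the [c_j] are large, so all [c_j]
   vanish. *)

Definition nat_floor (x : R) : nat := Z.to_nat (Int_part x).

Lemma nat_floor_spec x : 0 <= x -> INR (nat_floor x) <= x < INR (nat_floor x) + 1.
Proof.
  intros Hx. destruct (base_Int_part x) as [Hle Hlt].
  assert (Hnonneg : (0 <= Int_part x)%Z).
  { enough (Hgt : (-1 < Int_part x)%Z) by lia. apply lt_IZR. lra. }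
  unfold nat_floor. rewrite INR_IZR_INZ, Z2Nat.id by exact Hnonneg. lra.
Qed.

Lemma le_nat_floor x m : 0 <= x -> INR m <= x -> (m <= nat_floor x)%nat.
Proof.
  intros Hx Hm. apply Nat.lt_succ_r, INR_lt.
  rewrite S_INR. pose proof (nat_floor_spec x Hx). lra.
Qed.

Lemma nat_floor_INR m : nat_floor (INR m) = m.
Proof.
  apply Nat.le_antisymm.
  - apply INR_le. apply nat_floor_spec, pos_INR.
  - apply le_nat_floor; [apply pos_INR | lra].
Qed.

Lemma nat_floor_le x y : 0 <= x -> x <= y -> (nat_floor x <= nat_floor y)%nat.
Proof. intros Hx Hxy. apply le_nat_floor; pose proof (nat_floor_spec x Hx); lra. Qed.

Lemma nat_floor_add x y : 0 <= x -> 0 <= y -> (nat_floor x + nat_floor y <= nat_floor (x + y))%nat.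
Proof.
  intros Hx Hy. apply le_nat_floor; [lra|]. rewrite plus_INR.
  pose proof (nat_floor_spec x Hx). pose proof (nat_floor_spec y Hy). lra.
Qed.

Definition is_int (x : R) : Prop := exists z : Z, x = IZR z.

Lemma is_int_IZR z : is_int (IZR z).
Proof. now exists z. Qed.

Lemma is_int_plus x y : is_int x -> is_int y -> is_int (x + y).
Proof. intros [a ->] [b ->]. exists (a + b)%Z. now rewrite plus_IZR. Qed.

Lemma is_int_mult x y : is_int x -> is_int y -> is_int (x * y).
Proof. intros [a ->] [b ->]. exists (a * b)%Z. now rewrite mult_IZR. Qed.

Lemma is_int_opp x : is_int x -> is_int (- x).
Proof. intros [a ->]. exists (- a)%Z. now rewrite opp_IZR. Qed.

Lemma is_int_pow2 n : is_int (2 ^ n).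
Proof. exists (2 ^ Z.of_nat n)%Z. now rewrite <- pow_IZR. Qed.

Lemma is_int_sum f n : (forall i, (i <= n)%nat -> is_int (f i)) -> is_int (sum_f_R0 f n).
Proof.
  induction n as [|n IH]; intros Hf; simpl.
  - apply Hf; lia.
  - apply is_int_plus; [apply IH; intros; apply Hf; lia | apply Hf; lia].
Qed.

Lemma is_int_Rabs_lt1 x : is_int x -> Rabs x < 1 -> x = 0.
Proof.
  intros [z ->] Hz. rewrite Rabs_Zabs in Hz. apply lt_IZR in Hz.
  now replace z with 0%Z by lia.
Qed.

Lemma two_pow_pos n : 0 < 2 ^ n.
Proof. apply pow_lt; lra. Qed.

Lemma INR_lt_two_pow n : INR n < 2 ^ n.
Proof.
  induction n as [|n IH]; [simpl; lra|]. rewrite S_INR. simpl.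
  assert (1 <= 2 ^ n) by (apply pow_R1_Rle; lra). lra.
Qed.

Lemma pow2_div B e : (e <= B)%nat -> 2 ^ B / 2 ^ e = 2 ^ (B - e).
Proof.
  intros Hle. replace B with (e + (B - e))%nat at 1 by lia.
  rewrite pow_add. pose proof (two_pow_pos e). field. lra.
Qed.

Lemma Rinv_pow2_le e f : (f <= e)%nat -> / 2 ^ e <= / 2 ^ f.
Proof. intros Hfe. apply Rinv_le_contravar; [apply two_pow_pos | apply Rle_pow; [lra | exact Hfe]]. Qed.

Lemma pow2_mul_dyadic_sum (c : nat -> Z) (b : nat -> nat) (B G m : nat) :
  (forall i, (i <= m)%nat -> (b i + G <= B)%nat) ->
  exists K : Z, 2 ^ B * sum_f_R0 (fun i => IZR (c i) / 2 ^ b i) m = 2 ^ G * IZR K.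
Proof.
  intros Hb.
  destruct (is_int_sum (fun i => IZR (c i) * 2 ^ (B - b i - G)) m) as [K HK].
  { intros i _. apply is_int_mult; [apply is_int_IZR | apply is_int_pow2]. }
  exists K. rewrite <- HK, !scal_sum. apply sum_eq. intros i Hi.
  specialize (Hb i Hi).
  replace (2 ^ B) with (2 ^ b i * 2 ^ G * 2 ^ (B - b i - G))
    by (rewrite <- !pow_add; f_equal; lia).
  pose proof (two_pow_pos (b i)). field. lra.
Qed.

Lemma pow2_mul_IZR_small G (K : Z) : Rabs (2 ^ G * IZR K) < 2 ^ G -> K = 0%Z.
Proof.
  intros HK. pose proof (two_pow_pos G).
  rewrite Rabs_mult, Rabs_pos_eq in HK by lra.
  apply eq_IZR, is_int_Rabs_lt1; [apply is_int_IZR|].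
  apply (Rmult_lt_reg_l (2 ^ G)); lra.
Qed.

Lemma gaps_le_last (b : nat -> nat) G n :
  (forall i, (i < n)%nat -> (b i + G <= b (S i))%nat) ->
  forall i, (i < n)%nat -> (b i + G <= b n)%nat.
Proof.
  induction n as [|n IH]; intros Hgap i Hi; [lia|].
  assert (Hn := Hgap n (Nat.lt_succ_diag_r n)).
  destruct (Nat.eq_dec i n) as [->|Hne]; [exact Hn|].
  assert (Hi' := IH (fun j Hj => Hgap j (Nat.lt_lt_succ_r _ _ Hj)) i ltac:(lia)). lia.
Qed.

(* Multiplying by the largest power of two shows that the last coefficient is a
   multiple of [2 ^ G], hence zero; then induct. *)
Lemma sparse_dyadic_sum_eq0 m : forall (c : nat -> Z) (b : nat -> nat) (G : nat),
  (forall i, (i < m)%nat -> (b i + G <= b (S i))%nat) ->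
  (forall i, (i <= m)%nat -> Rabs (IZR (c i)) < 2 ^ G) ->
  sum_f_R0 (fun i => IZR (c i) / 2 ^ b i) m = 0 ->
  forall i, (i <= m)%nat -> c i = 0%Z.
Proof.
  induction m as [|m IH]; intros c b G Hgap Hc Hsum i Hi.
  - replace i with 0%nat by lia. simpl in Hsum. pose proof (two_pow_pos (b 0%nat)).
    apply eq_IZR. apply (Rmult_eq_reg_r (/ 2 ^ b 0%nat)); [lra|].
    apply Rinv_neq_0_compat. lra.
  - rewrite tech5 in Hsum.
    set (X := sum_f_R0 (fun i => IZR (c i) / 2 ^ b i) m) in Hsum.
    destruct (pow2_mul_dyadic_sum c b (b (S m)) G m) as [K HK].
    { intros j Hj. apply gaps_le_last; [exact Hgap | lia]. }
    assert (Hlast : IZR (c (S m)) = 2 ^ G * IZR (- K)).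
    { rewrite opp_IZR, <- Ropp_mult_distr_r, <- HK. fold X.
      pose proof (two_pow_pos (b (S m))).
      replace X with (- (IZR (c (S m)) / 2 ^ b (S m))) by lra. field. lra. }
    assert (Hc0 : c (S m) = 0%Z).
    { assert (HK0 : (- K)%Z = 0%Z).
      { apply (pow2_mul_IZR_small G). rewrite <- Hlast. apply Hc. lia. }
      apply eq_IZR. rewrite Hlast, HK0. ring. }
    destruct (Nat.eq_dec i (S m)) as [->|Hne]; [exact Hc0|].
    apply (IH c b G); try lia.
    + intros j Hj. apply Hgap. lia.
    + intros j Hj. apply Hc. lia.
    + rewrite Hc0 in Hsum. unfold X, Rdiv in Hsum. rewrite Rmult_0_l in Hsum. lra.
Qed.

Lemma Q_common_denominator (q : nat -> Q) (n : nat) : exists (D : Z) (z : nat -> Z),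
  (0 < D)%Z /\ forall j, (j <= n)%nat -> Q2R (q j) * IZR D = IZR (z j).
Proof.
  induction n as [|n [D [z [HD Hz]]]].
  - exists (Zpos (Qden (q 0%nat))), (fun _ => Qnum (q 0%nat)). split; [lia|].
    intros j Hj. replace j with 0%nat by lia. unfold Q2R.
    assert (IZR (Zpos (Qden (q 0%nat))) <> 0) by (apply not_0_IZR; discriminate).
    field. assumption.
  - set (d := Zpos (Qden (q (S n)))).
    exists (D * d)%Z, (fun j => if (j <=? n)%nat then (z j * d)%Z else (Qnum (q (S n)) * D)%Z).
    split; [lia|]. intros j Hj.
    destruct (Nat.leb_spec j n) as [Hjn|Hjn]; rewrite !mult_IZR.
    + rewrite <- (Hz j Hjn). ring.
    + replace j with (S n) by lia. unfold Q2R, d.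
      assert (IZR (Zpos (Qden (q (S n)))) <> 0) by (apply not_0_IZR; discriminate).
      field. assumption.
Qed.

Definition Z_lin_indep (k : nat) (x : nat -> R) : Prop :=
  forall z : nat -> Z,
    sum_f_R0 (fun j => IZR (z j) * x j) k = 0 ->
    forall j, (j <= k)%nat -> z j = 0%Z.

Lemma Z_lin_indep_Q_lin_indep k x : Z_lin_indep k x -> Q_lin_indep k x.
Proof.
  intros Hind q Hq j Hj.
  destruct (Q_common_denominator q k) as [D [z [HD Hz]]].
  assert (HD0 : IZR D <> 0) by (apply not_0_IZR; lia).
  assert (Hzj : z j = 0%Z).
  { apply Hind; [|exact Hj].
    rewrite <- (Rmult_0_l (IZR D)), <- Hq, Rmult_comm, scal_sum.
    apply sum_eq. intros i Hi. rewrite <- (Hz i Hi). ring. }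
  apply eqR_Qeq. replace (Q2R 0) with 0 by (unfold Q2R; simpl; field).
  apply (Rmult_eq_reg_r (IZR D)); [|exact HD0].
  rewrite Hz, Hzj by exact Hj. ring.
Qed.

Lemma sum_f_R0_ge_term f n i :
  (forall j, (j <= n)%nat -> 0 <= f j) -> (i <= n)%nat -> f i <= sum_f_R0 f n.
Proof.
  revert i. induction n as [|n IH]; intros i Hf Hi.
  - replace i with 0%nat by lia. simpl. lra.
  - rewrite tech5. assert (Hlast := Hf (S n) (le_n _)).
    destruct (Nat.eq_dec i (S n)) as [->|Hne].
    + assert (f 0%nat <= sum_f_R0 f n) by (apply (IH 0%nat); [intros j Hj; apply Hf |]; lia).
      assert (0 <= f 0%nat) by (apply Hf; lia). lra.
    + assert (f i <= sum_f_R0 f n) by (apply IH; [intros j Hj; apply Hf |]; lia). lra.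
Qed.

Lemma ex_series_geom_half c : ex_series (fun m => c * (/ 2) ^ m).
Proof.
  apply (ex_series_scal_l c (fun m => (/ 2) ^ m)), ex_series_geom.
  rewrite Rabs_pos_eq; lra.
Qed.

Section SparseRows.

Variables (k : nat) (b : nat -> nat -> nat).
Hypothesis row_incr : forall n j, (1 <= j)%nat -> (j < k)%nat -> (b n j < b n (S j))%nat.
Hypothesis row_lt_next : forall n, (b n k < b (S n) 1)%nat.

Lemma row_le n i j : (1 <= i)%nat -> (i <= j)%nat -> (j <= k)%nat -> (b n i <= b n j)%nat.
Proof.
  intros Hi Hij Hjk. induction j as [|j IH]; [lia|].
  destruct (Nat.eq_dec i (S j)) as [->|Hne]; [lia|].
  assert (b n j < b n (S j))%nat by (apply row_incr; lia).
  assert (b n i <= b n j)%nat by (apply IH; lia). lia.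
Qed.

Lemma col_incr n j : (1 <= j <= k)%nat -> (b n j < b (S n) j)%nat.
Proof.
  intros Hj. pose proof (row_le n j k ltac:(lia) ltac:(lia) (le_n k)).
  pose proof (row_le (S n) 1 j (le_n 1) ltac:(lia) ltac:(lia)).
  pose proof (row_lt_next n). lia.
Qed.

Definition dyadic_tail j N := Series (fun m => / 2 ^ b (N + m) j).

Section Column.

Variable j : nat.
Hypothesis Hj : (1 <= j <= k)%nat.

Lemma dyadic_tail_term_bound N m :
  0 <= / 2 ^ b (N + m) j <= / 2 ^ b N j * (/ 2) ^ m.
Proof.
  split; [left; apply Rinv_0_lt_compat, two_pow_pos|].
  rewrite pow_inv, <- Rinv_mult, <- pow_add. apply Rinv_pow2_le.
  induction m as [|m IH]; [rewrite !Nat.add_0_r; lia|].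
  replace (N + S m)%nat with (S (N + m)) by lia. pose proof (col_incr (N + m) j Hj). lia.
Qed.

Lemma ex_series_dyadic_tail N : ex_series (fun m => / 2 ^ b (N + m) j).
Proof.
  apply (@ex_series_le R_AbsRing R_CompleteNormedModule)
    with (b := fun m => / 2 ^ b N j * (/ 2) ^ m); [|apply ex_series_geom_half].
  intros m. change (norm ?x) with (Rabs x).
  pose proof (dyadic_tail_term_bound N m). rewrite Rabs_pos_eq; lra.
Qed.

Lemma dyadic_tail_bound N : 0 <= dyadic_tail j N <= 2 / 2 ^ b N j.
Proof.
  unfold dyadic_tail. split.
  - apply Rle_trans with (Series (fun m => 0 * (/ 2) ^ m)); [rewrite Series_scal_l; lra|].
    apply Series_le; [|apply ex_series_dyadic_tail].
    intros m. pose proof (dyadic_tail_term_bound N m). lra.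
  - apply Rle_trans with (Series (fun m => / 2 ^ b N j * (/ 2) ^ m)).
    + apply Series_le; [apply dyadic_tail_term_bound | apply ex_series_geom_half].
    + rewrite Series_scal_l, Series_geom by (rewrite Rabs_pos_eq; lra).
      right. field. apply pow_nonzero. lra.
Qed.

Lemma dyadic_tail_S N : dyadic_tail j N = / 2 ^ b N j + dyadic_tail j (S N).
Proof.
  unfold dyadic_tail. rewrite Series_incr_1 by apply ex_series_dyadic_tail.
  rewrite Nat.add_0_r. f_equal. apply Series_ext. intros m. now rewrite Nat.add_succ_r.
Qed.

End Column.

Hypothesis Hk : (1 <= k)%nat.

Section IntegerRelation.

Variable z : nat -> Z.

Definition tail_comb N := sum_f_R0 (fun i => IZR (z (S i)) * dyadic_tail (S i) N) (pred k).
Definition row_comb N := sum_f_R0 (fun i => IZR (z (S i)) / 2 ^ b N (S i)) (pred k).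
Definition coef_norm := sum_f_R0 (fun i => Rabs (IZR (z (S i)))) (pred k).

Lemma tail_comb_S N : tail_comb N = row_comb N + tail_comb (S N).
Proof.
  unfold tail_comb, row_comb. rewrite <- sum_plus. apply sum_eq. intros i Hi.
  rewrite (dyadic_tail_S (S i)) by lia. unfold Rdiv. ring.
Qed.

Lemma coef_norm_ge i : (i <= pred k)%nat -> Rabs (IZR (z (S i))) <= coef_norm.
Proof.
  intros Hi. apply (sum_f_R0_ge_term (fun i => Rabs (IZR (z (S i))))); [|exact Hi].
  intros. apply Rabs_pos.
Qed.

(* The row sums are dyadic with denominators at most [2 ^ b N k]. *)
Lemma is_int_scaled_tail_comb N : is_int (tail_comb 0) -> is_int (2 ^ b N k * tail_comb (S N)).
Proof.
  intros H0.
  assert (Hrow : forall M, is_int (2 ^ b M k * row_comb M)).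
  { intros M. unfold row_comb. rewrite scal_sum. apply is_int_sum. intros i Hi.
    replace (IZR (z (S i)) / 2 ^ b M (S i) * 2 ^ b M k)
      with (IZR (z (S i)) * (2 ^ b M k / 2 ^ b M (S i))) by (unfold Rdiv; ring).
    rewrite pow2_div by (apply row_le; lia).
    apply is_int_mult; [apply is_int_IZR | apply is_int_pow2]. }
  induction N as [|N IH].
  - replace (tail_comb 1) with (tail_comb 0 - row_comb 0) by (rewrite (tail_comb_S 0); ring).
    rewrite Rmult_minus_distr_l. apply is_int_plus; [|apply is_int_opp, Hrow].
    apply is_int_mult; [apply is_int_pow2 | exact H0].
  - replace (tail_comb (S (S N))) with (tail_comb (S N) - row_comb (S N))
      by (rewrite (tail_comb_S (S N)); ring).
    assert (Hle : (b N k <= b (S N) k)%nat) by (apply Nat.lt_le_incl, col_incr; lia).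
    replace (2 ^ b (S N) k) with (2 ^ (b (S N) k - b N k) * 2 ^ b N k)
      by (rewrite <- pow_add; f_equal; lia).
    rewrite Rmult_minus_distr_l, Rmult_assoc. apply is_int_plus.
    + apply is_int_mult; [apply is_int_pow2 | exact IH].
    + rewrite <- pow_add, Nat.sub_add by exact Hle. apply is_int_opp, Hrow.
Qed.

Lemma tail_comb_bound N : Rabs (tail_comb N) <= 2 * coef_norm / 2 ^ b N 1.
Proof.
  replace (2 * coef_norm / 2 ^ b N 1)
    with (sum_f_R0 (fun i => Rabs (IZR (z (S i))) * (2 / 2 ^ b N 1)) (pred k))
    by (unfold coef_norm; rewrite <- scal_sum; unfold Rdiv; ring).
  eapply Rle_trans; [apply sum_f_R0_triangle|]. apply sum_Rle. intros i Hi.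
  pose proof (dyadic_tail_bound (S i) ltac:(lia) N) as [Hpos Hle].
  rewrite Rabs_mult, (Rabs_pos_eq (dyadic_tail _ _)) by exact Hpos.
  apply Rmult_le_compat_l; [apply Rabs_pos|].
  apply Rle_trans with (1 := Hle). unfold Rdiv. apply Rmult_le_compat_l; [lra|].
  apply Rinv_pow2_le, row_le; lia.
Qed.

Lemma tail_comb_eq0 N G : is_int (tail_comb 0) -> 2 * coef_norm + 1 < 2 ^ G ->
  (b N k + G <= b (S N) 1)%nat -> tail_comb (S N) = 0.
Proof.
  intros H0 HG Hgap. pose proof (two_pow_pos (b N k)).
  enough (Hscaled : 2 ^ b N k * tail_comb (S N) = 0).
  { apply Rmult_integral in Hscaled as [Hz|Hz]; [lra | exact Hz]. }
  apply is_int_Rabs_lt1; [apply is_int_scaled_tail_comb, H0|].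
  rewrite Rabs_mult, Rabs_pos_eq by lra.
  apply Rle_lt_trans with (2 ^ b N k * (2 * coef_norm / 2 ^ b (S N) 1)).
  { apply Rmult_le_compat_l; [lra | apply tail_comb_bound]. }
  assert (Hnorm : 0 <= coef_norm) by (apply cond_pos_sum; intros; apply Rabs_pos).
  assert (Hpow : 2 ^ b N k * 2 ^ G <= 2 ^ b (S N) 1)
    by (rewrite <- pow_add; apply Rle_pow; [lra | exact Hgap]).
  pose proof (two_pow_pos G). pose proof (two_pow_pos (b (S N) 1)).
  apply (Rmult_lt_reg_r (2 ^ b (S N) 1)); [lra|].
  unfold Rdiv. rewrite Rmult_assoc, Rmult_assoc, Rinv_l by lra. nra.
Qed.

End IntegerRelation.

Hypothesis gaps_unbounded : forall G, exists N0, forall N, (N0 <= N)%nat ->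
  (b N k + G <= b (S N) 1)%nat /\
  (forall j, (1 <= j)%nat -> (j < k)%nat -> (b N j + G <= b N (S j))%nat).

Theorem Z_lin_indep_sparse_rows :
  Z_lin_indep k (fun j => if Nat.eqb j 0 then 1 else dyadic_tail j 0).
Proof.
  intros z Hrel.
  rewrite decomp_sum in Hrel by lia.
  change (IZR (z 0%nat) * 1 + tail_comb z 0 = 0) in Hrel.
  assert (H0 : is_int (tail_comb z 0))
    by (replace (tail_comb z 0) with (- IZR (z 0%nat)) by lra; apply is_int_opp, is_int_IZR).
  destruct (INR_unbounded (2 * coef_norm z + 1)) as [G HG].
  pose proof (INR_lt_two_pow G) as HG2.
  destruct (gaps_unbounded G) as [N0 HN0].
  destruct (HN0 N0 (le_n _)) as [Hgap0 _].
  destruct (HN0 (S N0) (Nat.le_succ_diag_r _)) as [Hgap1 Hrowgap].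
  assert (Hrow : row_comb z (S N0) = 0).
  { pose proof (tail_comb_S z (S N0)) as Hsplit.
    rewrite (tail_comb_eq0 z N0 G), (tail_comb_eq0 z (S N0) G) in Hsplit
      by (assumption || lra).
    lra. }
  assert (Hz : forall i, (i <= pred k)%nat -> z (S i) = 0%Z).
  { apply (sparse_dyadic_sum_eq0 (pred k) (fun i => z (S i)) (fun i => b (S N0) (S i)) G).
    - intros i Hi. apply Hrowgap; lia.
    - intros i Hi. pose proof (coef_norm_ge z i Hi). pose proof (Rabs_pos (IZR (z (S i)))). lra.
    - exact Hrow. }
  intros j Hj. destruct j as [|j]; [|apply Hz; lia].
  assert (Htail0 : tail_comb z 0 = 0).
  { unfold tail_comb. rewrite <- (Rmult_0_l (INR (S (pred k)))), <- sum_cte.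
    apply sum_eq. intros i Hi. rewrite Hz by exact Hi. ring. }
  apply eq_IZR. lra.
Qed.

End SparseRows.

Lemma is_lim_seq_const_div_INR_S c : is_lim_seq (fun n => c / INR (S n)) 0.
Proof.
  replace (Finite 0) with (Rbar_mult c 0) by (simpl; f_equal; ring).
  apply is_lim_seq_scal_l. replace (Finite 0) with (Rbar_inv p_infty) by reflexivity.
  apply is_lim_seq_inv; [|discriminate].
  apply (is_lim_seq_incr_1 INR p_infty), is_lim_seq_INR.
Qed.

Lemma is_lim_seq_ratio_approx (P num d : nat -> R) (c C : R) :
  (forall n, INR (S n) <= P n) ->
  (forall n, Rabs (num n - c * P n) <= C) ->
  (forall n, 0 <= d n) ->
  is_lim_seq (fun n => d n / P n) 0 ->
  is_lim_seq (fun n => num n / (P n + d n)) c.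
Proof.
  intros HP Hnum Hd Hdlim.
  assert (HPpos : forall n, 0 < P n).
  { intros n. apply Rlt_le_trans with (2 := HP n), lt_0_INR. lia. }
  assert (Herr : is_lim_seq (fun n => (num n - c * P n) / P n) 0).
  { apply is_lim_seq_abs_0, is_lim_seq_le_le with (u := fun _ => 0) (w := fun n => C / INR (S n));
      [|apply is_lim_seq_const | apply is_lim_seq_const_div_INR_S].
    intros n. pose proof (HPpos n). split; [apply Rabs_pos|].
    rewrite Rabs_div, (Rabs_pos_eq (P n)) by lra. unfold Rdiv.
    apply Rmult_le_compat; [apply Rabs_pos | left; apply Rinv_0_lt_compat; lra | apply Hnum |].
    apply Rinv_le_contravar; [apply lt_0_INR; lia | apply HP]. }
  assert (Hlim := is_lim_seq_div' _ _ _ _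
    (is_lim_seq_plus' _ _ c 0 (is_lim_seq_const c) Herr)
    (is_lim_seq_plus' _ _ 1 0 (is_lim_seq_const 1) Hdlim) ltac:(lra)).
  replace (Finite c) with (Finite ((c + 0) / (1 + 0))) by (f_equal; field).
  eapply is_lim_seq_ext; [|exact Hlim].
  intros n. simpl. pose proof (HPpos n). pose proof (Hd n). field. lra.
Qed.

Fixpoint row_top (k n : nat) : nat :=
  match n with
  | O => 0
  | S n => row_top k n + k + S n * (row_top k n + 1)
  end.

Definition row_scale (k n : nat) : nat := S n * (row_top k n + 1).

Definition cumsum (eta : nat -> R) (j : nat) : R :=
  match j with O => 0 | S j => sum_f_R0 (fun i => eta (S i)) j end.

Definition exps (k : nat) (eta : nat -> R) (n j : nat) : nat :=
  match n with
  | O => 0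
  | S n => row_top k n + j + nat_floor (cumsum eta j * INR (row_scale k n))
  end.

Lemma row_top_S k n : row_top k (S n) = (row_top k n + k + row_scale k n)%nat.
Proof. reflexivity. Qed.

Lemma S_le_row_scale k n : (S n <= row_scale k n)%nat.
Proof. unfold row_scale. nia. Qed.

Lemma INR_row_scale k n : INR (row_scale k n) = INR (S n) * (INR (row_top k n) + 1).
Proof. unfold row_scale. now rewrite mult_INR, plus_INR. Qed.

Lemma cumsum_S eta j : cumsum eta (S j) = cumsum eta j + eta (S j).
Proof. destruct j; simpl; lra. Qed.

Lemma is_lim_seq_row_top_div_scale k : (1 <= k)%nat ->
  is_lim_seq (fun n => (INR (row_top k n) + INR k) / INR (row_scale k n)) 0.
Proof.
  intros Hk.
  apply is_lim_seq_le_le with (u := fun _ => 0) (w := fun n => INR k / INR (S n));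
    [|apply is_lim_seq_const | apply is_lim_seq_const_div_INR_S].
  intros n. pose proof (pos_INR (row_top k n)). pose proof (lt_0_INR (S n) (Nat.lt_0_succ n)).
  assert (Hk1 : 1 <= INR k) by (apply (le_INR 1); exact Hk).
  assert (HP : 0 < INR (row_scale k n)) by (rewrite INR_row_scale; nra).
  split; [apply Rle_mult_inv_pos; lra|].
  replace (INR k / INR (S n)) with (INR k * (INR (row_top k n) + 1) / INR (row_scale k n))
    by (rewrite INR_row_scale; field; lra).
  unfold Rdiv. apply Rmult_le_compat_r; [left; apply Rinv_0_lt_compat, HP | nra].
Qed.

Section Construction.

Variables (k : nat) (eta : nat -> R).
Hypothesis Hk : (1 <= k)%nat.
Hypothesis cumsum_k : cumsum eta k = 1.
Hypothesis eta1_pos : 0 < eta 1%nat.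
Hypothesis eta_ge_eta1 : forall i, (1 <= i <= k)%nat -> eta 1%nat <= eta i.

Lemma cumsum_le i j : (i <= j)%nat -> (j <= k)%nat -> cumsum eta i <= cumsum eta j.
Proof.
  intros Hij Hjk. induction j as [|j IH].
  - replace i with 0%nat by lia. lra.
  - destruct (Nat.eq_dec i (S j)) as [->|Hne]; [lra|].
    rewrite cumsum_S. assert (eta 1%nat <= eta (S j)) by (apply eta_ge_eta1; lia).
    assert (cumsum eta i <= cumsum eta j) by (apply IH; lia). lra.
Qed.

Lemma cumsum_bounds j : (j <= k)%nat -> 0 <= cumsum eta j <= 1.
Proof.
  intros Hj. rewrite <- cumsum_k. split.
  - apply (cumsum_le 0); lia.
  - apply cumsum_le; lia.
Qed.

Lemma cumsum_mul_scale_nonneg j n : (j <= k)%nat -> 0 <= cumsum eta j * INR (row_scale k n).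
Proof. intros Hj. apply Rmult_le_pos; [apply cumsum_bounds, Hj | apply pos_INR]. Qed.

Lemma exps_top n : exps k eta n k = row_top k n.
Proof. destruct n; [reflexivity|]. simpl. now rewrite cumsum_k, Rmult_1_l, nat_floor_INR. Qed.

Definition first_gap n : nat := S (nat_floor (eta 1%nat * INR (row_scale k n))).

Lemma first_gap_gt n : eta 1%nat * INR (row_scale k n) < INR (first_gap n).
Proof.
  unfold first_gap. rewrite S_INR. apply nat_floor_spec.
  apply Rmult_le_pos; [lra | apply pos_INR].
Qed.

Lemma exps_first n : exps k eta (S n) 1 = (row_top k n + first_gap n)%nat.
Proof. unfold first_gap. simpl. lia. Qed.

Lemma exps_gap n j : (1 <= j < k)%nat ->
  (exps k eta (S n) j + first_gap n <= exps k eta (S n) (S j))%nat.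
Proof.
  intros Hj. unfold exps, first_gap. rewrite cumsum_S, Rmult_plus_distr_r.
  assert (eta 1%nat <= eta (S j)) by (apply eta_ge_eta1; lia).
  pose proof (cumsum_mul_scale_nonneg j n ltac:(lia)). pose proof (pos_INR (row_scale k n)).
  assert (Hfl : (nat_floor (cumsum eta j * INR (row_scale k n))
                 + nat_floor (eta 1%nat * INR (row_scale k n))
                 <= nat_floor (cumsum eta j * INR (row_scale k n) + eta (S j) * INR (row_scale k n)))%nat).
  { eapply Nat.le_trans; [apply nat_floor_add; nra|]. apply nat_floor_le; nra. }
  lia.
Qed.

Lemma INR_exps_top_S n :
  INR (exps k eta (S n) k) = INR (row_scale k n) + (INR (row_top k n) + INR k).
Proof. rewrite exps_top, row_top_S, !plus_INR. ring. Qed.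

Lemma is_lim_seq_first_gap_ratio :
  is_lim_seq (fun n => (INR (exps k eta (S n) 1) - INR (exps k eta n k)) / INR (exps k eta (S n) k))
    (eta 1%nat).
Proof.
  apply is_lim_seq_ext with
    (u := fun n => INR (first_gap n) / (INR (row_scale k n) + (INR (row_top k n) + INR k))).
  { intros n. rewrite INR_exps_top_S, exps_top, exps_first, plus_INR. f_equal. ring. }
  apply is_lim_seq_ratio_approx with (C := 1);
    [intros n; apply le_INR, S_le_row_scale | | | apply is_lim_seq_row_top_div_scale, Hk].
  - intros n. unfold first_gap. rewrite S_INR.
    pose proof (nat_floor_spec (eta 1%nat * INR (row_scale k n))
                  (Rmult_le_pos _ _ (Rlt_le _ _ eta1_pos) (pos_INR _))).
    apply Rabs_le. lra.
  - intros n. pose proof (pos_INR (row_top k n)). pose proof (pos_INR k). lra.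
Qed.

Lemma is_lim_seq_inner_gap_ratio i : (2 <= i <= k)%nat ->
  is_lim_seq (fun n => (INR (exps k eta n i) - INR (exps k eta n (pred i))) / INR (exps k eta n k))
    (eta i).
Proof.
  intros Hi. apply is_lim_seq_incr_1. destruct i as [|i]; [lia|]. simpl pred.
  apply is_lim_seq_ext with (u := fun n =>
    (INR (exps k eta (S n) (S i)) - INR (exps k eta (S n) i))
      / (INR (row_scale k n) + (INR (row_top k n) + INR k))).
  { intros n. now rewrite INR_exps_top_S. }
  apply is_lim_seq_ratio_approx with (C := 2);
    [intros n; apply le_INR, S_le_row_scale | | | apply is_lim_seq_row_top_div_scale, Hk].
  - intros n. unfold exps. rewrite !plus_INR, cumsum_S, S_INR, Rmult_plus_distr_r.
    pose proof (pos_INR (row_scale k n)).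
    assert (eta 1%nat <= eta (S i)) by (apply eta_ge_eta1; lia).
    pose proof (cumsum_mul_scale_nonneg i n ltac:(lia)).
    pose proof (nat_floor_spec (cumsum eta i * INR (row_scale k n)) ltac:(lra)).
    pose proof (nat_floor_spec (cumsum eta i * INR (row_scale k n) + eta (S i) * INR (row_scale k n))
                  ltac:(nra)).
    apply Rabs_le. lra.
  - intros n. pose proof (pos_INR (row_top k n)). pose proof (pos_INR k). lra.
Qed.

Lemma is_lim_seq_next_row_ratio :
  is_lim_seq (fun n => INR (exps k eta (S n) 1) / INR (exps k eta n k)) p_infty.
Proof.
  apply is_lim_seq_le_p_loc with (u := fun n => eta 1%nat * INR n).
  - exists 1%nat. intros n Hn. rewrite exps_top, exps_first, plus_INR.
    assert (HA : 1 <= INR (row_top k n)).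
    { destruct n as [|n]; [lia|]. apply (le_INR 1). rewrite row_top_S. lia. }
    pose proof (first_gap_gt n) as HG. rewrite INR_row_scale in HG.
    pose proof (pos_INR n). rewrite S_INR in HG.
    apply (Rmult_le_reg_r (INR (row_top k n))); [lra|].
    replace (_ / _ * _) with (INR (row_top k n) + INR (first_gap n)) by (field; lra). nra.
  - replace p_infty with (Rbar_mult (eta 1%nat) p_infty)
      by (simpl; destruct (Rle_dec 0 (eta 1%nat)) as [Hle|Hle]; [|lra];
          destruct (Rle_lt_or_eq_dec 0 (eta 1%nat) Hle); [reflexivity | lra]).
    apply is_lim_seq_scal_l, is_lim_seq_INR.
Qed.

Lemma first_gap_unbounded G : exists N0, forall N, (N0 <= N)%nat -> (G <= first_gap N)%nat.
Proof.
  destruct (INR_unbounded (INR G / eta 1%nat)) as [N0 HN0].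
  exists N0. intros N HN. apply INR_le.
  assert (HN0' : INR G < eta 1%nat * INR N0).
  { apply (Rmult_lt_reg_r (/ eta 1%nat)); [apply Rinv_0_lt_compat, eta1_pos|].
    replace (eta 1%nat * INR N0 * / eta 1%nat) with (INR N0) by (field; lra). exact HN0. }
  pose proof (first_gap_gt N).
  assert (INR N0 <= INR (row_scale k N)) by (apply le_INR; pose proof (S_le_row_scale k N); lia).
  nra.
Qed.

Lemma exps_row_incr n j : (1 <= j)%nat -> (j < k)%nat ->
  (exps k eta (S n) j < exps k eta (S n) (S j))%nat.
Proof. intros Hj Hjk. pose proof (exps_gap n j ltac:(lia)). unfold first_gap in *. lia. Qed.

Lemma exps_row_lt_next n : (exps k eta n k < exps k eta (S n) 1)%nat.
Proof. rewrite exps_top, exps_first. unfold first_gap. lia. Qed.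

Lemma exps_gaps_unbounded G : exists N0, forall N, (N0 <= N)%nat ->
  (exps k eta (S N) k + G <= exps k eta (S (S N)) 1)%nat /\
  (forall j, (1 <= j)%nat -> (j < k)%nat -> (exps k eta (S N) j + G <= exps k eta (S N) (S j))%nat).
Proof.
  destruct (first_gap_unbounded G) as [N0 HN0]. exists N0. intros N HN. split.
  - rewrite exps_top, exps_first. pose proof (HN0 (S N) ltac:(lia)). lia.
  - intros j Hj Hjk. pose proof (exps_gap N j ltac:(lia)). pose proof (HN0 N HN). lia.
Qed.

End Construction.

Lemma cumsum_eq_sum_f_R0 eta k : (1 <= k)%nat ->
  cumsum eta k = sum_f_R0 (fun i => eta (S i)) (k - 1).
Proof. intros Hk. destruct k as [|k]; [lia|]. simpl. now rewrite Nat.sub_0_r. Qed.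

Lemma chain_ge_first (eta : nat -> R) k :
  (forall i, (1 <= i)%nat -> (i < k)%nat -> eta i <= eta (S i)) ->
  forall i, (1 <= i <= k)%nat -> eta 1%nat <= eta i.
Proof.
  intros Hmono i Hi. induction i as [|i IH]; [lia|].
  destruct (Nat.eq_dec i 0) as [->|Hne]; [lra|].
  pose proof (Hmono i ltac:(lia) ltac:(lia)). pose proof (IH ltac:(lia)). lra.
Qed.

Theorem proposition2p7 (k : nat) (eta : nat -> R) :
  (1 <= k)%nat ->
  sum_f_R0 (fun i => eta (S i)) (k - 1) = 1 ->
  0 < eta 1%nat ->
  (forall i : nat, (1 <= i)%nat -> (i < k)%nat -> eta i <= eta (S i)) ->
  exists a : nat -> nat -> nat,
    (forall n j, (1 <= n)%nat -> (1 <= j <= k)%nat -> (1 <= a n j)%nat) /\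
    (forall n j, (1 <= n)%nat -> (1 <= j)%nat -> (j < k)%nat ->
        (a n j < a n (S j))%nat) /\
    (forall n, (1 <= n)%nat -> (a n k < a (S n) 1%nat)%nat) /\
    is_lim_seq (fun n => (INR (a (S n) 1%nat) - INR (a n k)) / INR (a (S n) k))
      (eta 1%nat) /\
    (forall i, (2 <= i <= k)%nat ->
      is_lim_seq (fun n => (INR (a n i) - INR (a n (pred i))) / INR (a n k))
        (eta i)) /\
    is_lim_seq (fun n => INR (a (S n) 1%nat) / INR (a n k)) p_infty /\
    Q_lin_indep k (fun j => if Nat.eqb j 0 then 1 else zeta a j).
Proof.
  intros Hk Hsum Heta1 Hmono.
  assert (Hcumsum : cumsum eta k = 1) by (rewrite cumsum_eq_sum_f_R0; assumption).
  pose proof (chain_ge_first eta k Hmono) as Hge.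
  exists (exps k eta).
  split; [intros [|n] j Hn Hj; [lia | simpl; lia]|].
  split; [intros [|n] j Hn Hj Hjk; [lia | apply exps_row_incr; assumption]|].
  split; [intros n _; apply exps_row_lt_next; assumption|].
  split; [apply is_lim_seq_first_gap_ratio; assumption|].
  split; [intros i Hi; apply is_lim_seq_inner_gap_ratio; assumption|].
  split; [apply is_lim_seq_next_row_ratio; assumption|].
  apply Z_lin_indep_Q_lin_indep.
  apply (Z_lin_indep_sparse_rows k (fun n j => exps k eta (S n) j)); try assumption.
  - intros n j. apply exps_row_incr; assumption.
  - intros n. apply exps_row_lt_next; assumption.
  - apply exps_gaps_unbounded; assumption.
Qed.
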